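(* Let $n\geq a\geq 2$ be integers, and let $\ell$ be the smallest integer for which $\binom{\ell}{\lfloor \ell/2\rfloor}\geq a$. Then the Boolean lattice $(2^{[n-a+\ell]},\subseteq)$ of all subsets of $\{1,\dots,n-a+\ell\}$ ordered by inclusion contains every $n$-element poset which has an antichain of size $a$.
   Context: A poset $(U,\leq)$ contains a poset $(P,\preceq)$ if there is a subset $P'\subseteq U$ such that $(P',\leq)$ (the restriction of $\leq$ to $P'$) is isomorphic to $(P,\preceq)$; i.e. containment is as an induced subposet. An antichain is a set of pairwise incomparable elements. *)

From mathcomp Require Import all_boot all_order.
Set Implicit Arguments. Unset Strict Implicit. Unset Printing Implicit Defensive.
Import Order.TTheory.
Local Open Scope order_scope.

Definition antichain (d : Order.disp_t) (T : finPOrderType d) (A : {set T}) : Prop :=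
  forall x y, x \in A -> y \in A -> x != y -> ~~ (x >=< y).

(* The Boolean lattice (2^[m], ⊆) contains the poset T as an induced subposet:
   there is a subset P' of 2^[m] and an order isomorphism T ≅ (P', ⊆);
   equivalently an injective map f with x <= y <-> f x ⊆ f y. *)
Definition boolean_contains (m : nat) (d : Order.disp_t) (T : finPOrderType d) : Prop :=
  exists f : T -> {set 'I_m},
    injective f /\ forall x y : T, (x <= y) = (f x \subset f y).

From mathcomp Require Import all_boot all_order.
Set Implicit Arguments. Unset Strict Implicit. Unset Printing Implicit Defensive.
Local Open Scope order_scope.
Import Order.TTheory.

(* Let A be the antichain and U the set of elements lying strictly above some
   element of A.  Each element b outside A gives one coordinate: if b is not in
   U, w has coordinate b iff b <= w; if b is in U, iff ~ (w <= b).  These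
   coordinates already determine the order outside A.  The l remaining
   coordinates separate the elements of A: they are all set on U, all unset on
   the other elements outside A, and on x in A they form a set S x, where the
   S x are distinct sets of size l/2, hence pairwise incomparable, nonempty
   and proper (here l >= 2 is used). *)

Lemma exists_inj_in (T U : finType) (u0 : U) (A : {set T}) (B : {set U}) :
  (#|A| <= #|B|)%N ->
  exists2 f : T -> U, {in A &, injective f} & {in A, forall x, f x \in B}.
Proof.
move=> le_AB; pose f x := nth u0 (enum B) (index x (enum A)).
have idx_lt x : x \in A -> (index x (enum A) < size (enum B))%N.
  by move=> Ax; rewrite -cardE (leq_trans _ le_AB) // cardE index_mem mem_enum.
exists f => [x y Ax Ay /eqP|x Ax]; last by rewrite -mem_enum mem_nth ?idx_lt.
rewrite nth_uniq ?idx_lt ?enum_uniq // => /eqP eq_idx.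
by rewrite -[x](nth_index x (_ : x \in enum A)) ?eq_idx ?nth_index ?mem_enum.
Qed.

Lemma exists_antichain_family (T I : finType) (A : {set T}) (k : nat) :
  (0 < k < #|I|)%N -> (#|A| <= 'C(#|I|, k))%N ->
  exists S : T -> {set I},
    [/\ {in A &, forall x y, S x \subset S y -> x = y},
        {in A, forall x, S x != set0} & {in A, forall x, S x != setT}].
Proof.
case/andP => k_gt0 k_lt; rewrite -card_draws => /(exists_inj_in set0) [S injS SA].
have cardS x : x \in A -> #|S x| = k by move/SA; rewrite inE => /eqP.
exists S; split => [x y Ax Ay sub_xy|x Ax|x Ax].
- by apply: injS => //; apply/eqP; rewrite eqEcard sub_xy !cardS ?leqnn.
- by rewrite -card_gt0 cardS.
by apply: contraTneq k_lt => S_full; rewrite -(cardS x Ax) S_full cardsT ltnn.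
Qed.

Lemma boolean_contains_finType (m : nat) (d : Order.disp_t) (T : finPOrderType d)
  (G : finType) (f : T -> {set G}) :
  #|G| = m -> (forall x y : T, (x <= y) = (f x \subset f y)) -> boolean_contains m T.
Proof.
move=> cardG le_f; pose h (g : G) : 'I_m := cast_ord cardG (enum_rank g).
have inj_h : injective h by move=> g1 g2 /(congr1 val) /= /val_inj /enum_rank_inj.
have subset_h (X Y : {set G}) : (h @: X \subset h @: Y) = (X \subset Y).
  apply/idP/idP; last exact: imsetS.
  move=> /subsetP sub; apply/subsetP => x Xx.
  by have /imsetP [y Yy /inj_h ->] := sub _ (imset_f h Xx).
exists (fun x => h @: f x); split => [x y eq_hf|x y]; last by rewrite subset_h le_f.
by apply/le_anti; rewrite !le_f -!subset_h eq_hf subxx.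
Qed.

Section AntichainCode.

Variables (d : Order.disp_t) (T : finPOrderType d) (I : finType).
Variables (A : {set T}) (S : T -> {set I}).
Hypothesis antiA : antichain A.
Hypothesis S_antichain : {in A &, forall x y, S x \subset S y -> x = y}.
Hypothesis S_neq0 : {in A, forall x, S x != set0}.
Hypothesis S_neqT : {in A, forall x, S x != setT}.

Definition above_antichain (w : T) : bool := [exists x in A, x < w].

Definition antichain_tag (w : T) : {set I} :=
  if above_antichain w then setT else if w \in A then S w else set0.

Definition antichain_code (w : T) : {set {x : T | x \notin A} + I} :=
  [set c | match c with
           | inl b => if above_antichain (val b) then ~~ (w <= val b) else val b <= w
           | inr k => k \in antichain_tag w
           end].

Lemma above_antichain_le y z : y <= z -> above_antichain y -> above_antichain z.
Proof.
move=> le_yz /existsP [x /andP [Ax lt_xy]]; apply/existsP; exists x.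
by rewrite Ax (lt_le_trans lt_xy le_yz).
Qed.

Lemma antichain_not_above w : w \in A -> ~~ above_antichain w.
Proof.
move=> Aw; apply/existsP => [[x /andP [Ax lt_xw]]].
by have /negP := antiA Ax Aw (negbT (lt_eqF lt_xw)); rewrite /Order.comparable ltW.
Qed.

Lemma antichain_tag_le y z : y <= z -> antichain_tag y \subset antichain_tag z.
Proof.
rewrite /antichain_tag => le_yz.
case: ifP => [/(above_antichain_le le_yz) -> //|_].
case: ifP => [Ay|_]; last exact: sub0set.
have [<-|neq_yz] := eqVneq y z; first by rewrite ifN ?Ay ?antichain_not_above.
suff -> : above_antichain z by exact: subsetT.
by apply/existsP; exists y; rewrite Ay lt_neqAle neq_yz.
Qed.

Lemma antichain_tag_inj y z :
  (y \in A) || above_antichain y -> ~~ above_antichain z ->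
  antichain_tag y \subset antichain_tag z -> y = z.
Proof.
rewrite /antichain_tag => /orP high_y /negbTE -> .
case: high_y => [Ay|above_y].
  rewrite (negbTE (antichain_not_above Ay)) Ay.
  case: ifP => [Az|_]; first exact: S_antichain.
  by rewrite subset0 (negbTE (S_neq0 Ay)).
have [x Ax _] : exists2 x, x \in A & x < y by apply/exists_inP.
rewrite above_y; case: ifP => [Az|_]; first by rewrite subTset (negbTE (S_neqT Az)).
rewrite subTset => /eqP I0; have /set0Pn [i _] := S_neq0 Ax.
by have := in_setT i; rewrite -I0 inE.
Qed.

Lemma antichain_code_reflect y z :
  antichain_code y \subset antichain_code z -> y <= z.
Proof.
move=> /subsetP sub_code.
have coord b (nAb : b \notin A) :
    inl (exist _ b nAb) \in antichain_code y ->
    inl (exist _ b nAb) \in antichain_code z.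
  exact: sub_code.
have [/andP [nAz above_z]|low_z] := boolP ((z \notin A) && above_antichain z).
  apply: contraT => nle_yz.
  by have := coord z nAz; rewrite !inE /= above_z lexx nle_yz => /(_ isT).
have [/andP [nAy /negbTE low_y]|high_y] := boolP ((y \notin A) && ~~ above_antichain y).
  by have := coord y nAy; rewrite !inE /= low_y lexx => /(_ isT).
rewrite negb_and !negbK in high_y; rewrite negb_and negbK in low_z.
suff -> : y = z by [].
apply: antichain_tag_inj => //.
  by case/orP: low_z => [/antichain_not_above|].
by apply/subsetP => i; have := sub_code (inr i); rewrite !inE.
Qed.

Lemma antichain_code_le y z : (y <= z) = (antichain_code y \subset antichain_code z).
Proof.
apply/idP/idP => [le_yz|/antichain_code_reflect //].
apply/subsetP => -[b|i]; rewrite !inE; last exact/subsetP/antichain_tag_le.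
case: ifP => _; first by apply: contra => /(le_trans le_yz).
by move=> le_by; apply: le_trans le_by le_yz.
Qed.

End AntichainCode.

Theorem lemma3p2 (n a l : nat) (Ha2 : (2 <= a)%N) (Han : (a <= n)%N)
  (Hl : (a <= 'C(l, l./2))%N)
  (Hlmin : forall k : nat, (k < l)%N -> ('C(k, k./2) < a)%N)
  (d : Order.disp_t) (T : finPOrderType d) (HT : #|T| = n)
  (HA : exists A : {set T}, #|A| = a /\ antichain A) :
  boolean_contains (n - a + l) T.
Proof.
case: HA => A [cardA antiA].
have l_gt1 : (1 < l)%N by case: l Hl {Hlmin} => [|[|l]] // /(leq_trans Ha2).
have [S [S_antichain S_neq0 S_neqT]] : exists S : T -> {set 'I_l},
    [/\ {in A &, forall x y, S x \subset S y -> x = y},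
        {in A, forall x, S x != set0} & {in A, forall x, S x != setT}].
  apply: (exists_antichain_family (k := l./2)); last by rewrite card_ord cardA.
  by rewrite card_ord half_gt0 l_gt1 ltn_half_double -addnn -{1}[l]addn0 ltn_add2l ltnW.
apply: (@boolean_contains_finType _ _ _ ({x : T | x \notin A} + 'I_l)%type _ _
         (antichain_code_le antiA S_antichain S_neq0 S_neqT)).
rewrite card_sum card_ord card_sig -HT -(cardsC A) cardA addKn.
by congr addn; apply: eq_card => x; rewrite !inE.
Qed.
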